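(* Let $G$ be a finite group, $p$ a prime dividing $|G|$, $P\in\mathrm{Syl}_p(G)$ and $\Omega=\Omega_1(Z(P))$. If $r_p(G)-r_p(\Omega)\le1$, then the finite space $\mathcal{A}_p(G)'/G$ is contractible.
   Context: $\Omega_1(H)$ is the subgroup generated by the elements of order $p$ of $H$; $r_p(H)$ (the $p$-rank) is the largest $r$ such that $H$ has an elementary abelian subgroup of order $p^r$. $\mathcal{A}_p(G)$ is the poset of non-trivial elementary abelian $p$-subgroups of $G$, with $G$ acting by conjugation. $\mathcal{A}_p(G)'$ is the poset of non-empty chains of $\mathcal{A}_p(G)$ ordered by inclusion, with componentwise action; $\mathcal{A}_p(G)'/G$ is the orbit poset ($\overline{c}\le\overline{d}$ iff some representatives satisfy $c_1\subseteq d_1$), regarded as a finite $T_0$ space whose open sets are the down-sets. *)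

From HB Require Import structures.
From mathcomp Require Import all_boot all_order all_algebra all_fingroup all_solvable.
From mathcomp Require Import all_classical all_reals all_analysis.
From mathcomp Require Import Rstruct Rstruct_topology.

Set Implicit Arguments.
Unset Strict Implicit.
Unset Printing Implicit Defensive.

Local Open Scope classical_set_scope.

(* [alexandrov T le] is the type T with the topology whose open sets are the
   down-sets of the relation le.  For a finite poset this is the associated
   finite T0 space. *)
Definition alexandrov (T : choiceType) (le : rel T) : Type := T.

Section Alexandrov.
Variables (T : choiceType) (le : rel T).

Definition downset_open : set_system T :=
  fun U => forall x y, le y x -> U x -> U y.

Lemma downset_openT : downset_open setT.
Proof. by []. Qed.

Lemma downset_openI : setI_closed downset_open.
Proof. by move=> A B oA oB x y yx [Ax Bx]; split; [exact: oA yx Ax|exact: oB yx Bx]. Qed.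

Lemma downset_open_bigU (I : Type) (f : I -> set T) :
  (forall i, downset_open (f i)) -> downset_open (\bigcup_i f i).
Proof. by move=> oF x y yx [i _ fx]; exists i => //; exact: oF yx fx. Qed.

HB.instance Definition _ := Choice.on (alexandrov le).
HB.instance Definition _ := isOpenTopological.Build (alexandrov le)
  downset_openT downset_openI downset_open_bigU.
End Alexandrov.

Definition contractible (X : topologicalType) : Prop :=
  exists (x0 : X) (H : X * Rdefinitions.R -> X),
    {within [set xt : X * Rdefinitions.R | (0 <= xt.2 <= 1)%R], continuous H} /\
    (forall x, H (x, 0%R) = x) /\ (forall x, H (x, 1%R) = x0).

Local Close Scope classical_set_scope.
Section QuillenPoset.
Variables (gT : finGroupType) (G : {group gT}) (p : nat).

Definition Ap : {set {group gT}} := [set E in pElem p G | E :!=: 1%G].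

(* non-empty chains of A_p(G) (elements of A_p(G)') *)
Definition is_Ap_chain (c : {set {group gT}}) : bool :=
  [&& (0 < #|c|)%N, c \subset Ap &
      [forall E in c, forall F in c, (E \subset F) || (F \subset E)]].

Definition conj_chain (c : {set {group gT}}) (g : gT) : {set {group gT}} :=
  [set (E :^ g)%G | E in c].

Definition chain_orbit (c : {set {group gT}}) : {set {set {group gT}}} :=
  [set conj_chain c g | g in G].

Definition Ap_chain_orbits : {set {set {set {group gT}}}} :=
  [set chain_orbit c | c in [set c | is_Ap_chain c]].

Definition Ap_orbit_pt : Type := {O : {set {set {group gT}}} | O \in Ap_chain_orbits}.

HB.instance Definition _ := Finite.on Ap_orbit_pt.

Definition Ap_orbit_le : rel Ap_orbit_pt :=
  fun O1 O2 => [exists c in val O1, exists d in val O2, c \subset d].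

Definition Ap_orbit_space : topologicalType := alexandrov Ap_orbit_le.
End QuillenPoset.

From mathcomp Require Import all_boot all_order all_algebra all_fingroup all_solvable.
From mathcomp Require Import all_classical all_reals all_analysis.
From mathcomp Require Import Rstruct Rstruct_topology lra.

Set Implicit Arguments.
Unset Strict Implicit.
Unset Printing Implicit Defensive.

(* In a finite space, order-preserving maps f <= g are homotopic, so it suffices to join
   the identity of A_p(G)'/G to a constant map by a zigzag id <= f1 >= f2 <= f3 >= const
   of order-preserving maps.

   Write Omega(S) for Omega_1(Z(S)) and r for the p-rank of Omega(P).  For a chain c with
   top t and S in Syl_p(C_G(t)), Omega(S) contains t; it has rank r when t lies in a
   G-conjugate of Omega(P) (then S is Sylow in G) and, by the rank hypothesis, rank r + 1
   otherwise.  Let c_A be the part of c lying in conjugates of Omega(P).  When t does not,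
   f1(c) = c + {Omega(S)} and f2(c) = c_A + {Omega(S)}, and otherwise f1, f2 fix c; always
   f3(c) = c_A + {Omega(R), Omega(S)} with R in Syl_p(G) centralizing c_A and
   Omega(R) <= Omega(S), so that {Omega(P)} <= f3(c) in the orbit poset.  All choices are
   unique up to conjugation, which is invisible in A_p(G)'/G.  Monotonicity of f3 rests on
   a conjugacy lemma: if an elementary abelian M of rank r + 1 contains Omega(R1) and
   Omega(R2) for Sylow subgroups R1, R2 of H, they are conjugate in N_H(M). *)

Section AlexandrovHomotopy.
Import Order.TTheory GRing.Theory Num.Theory.
Local Open Scope classical_set_scope.
Local Open Scope ring_scope.
Local Notation R := Rdefinitions.R.
Variables (T : choiceType) (le : rel T).
Hypothesis le_rr : reflexive le.
Local Notation X := (alexandrov le).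

Lemma alexandrov_continuous_family (phi : R -> T -> T) :
  (forall s, {homo phi s : x y / le x y}) ->
  (forall t, exists2 B : set R, open B /\ B t & forall s x, B s -> le (phi s x) (phi t x)) ->
  continuous (fun z : X * R => phi z.2 z.1 : X).
Proof.
move=> homo_phi near_phi; apply/continuousP => A oA; rewrite openE => -[x t] /= Aphi.
have [B [oB Bt] leB] := near_phi t.
pose U : set X := [set y | forall s, B s -> A (phi s y)].
have oU : open U by move=> y y' le_y'y Uy s Bs; apply: oA (homo_phi s _ _ le_y'y) (Uy s Bs).
have Ux : U x by move=> s Bs; apply: oA (leB s x Bs) Aphi.
exists (U, B); first by split; apply: open_nbhs_nbhs.
by move=> [y s] [/= Uy Bs]; apply: Uy.
Qed.

Variables (f1 f2 f3 : T -> T) (x0 : T).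
Hypotheses (homo_f1 : {homo f1 : x y / le x y}) (homo_f2 : {homo f2 : x y / le x y})
  (homo_f3 : {homo f3 : x y / le x y}).
Hypotheses (le_f1 : forall x, le x (f1 x)) (le_f2f1 : forall x, le (f2 x) (f1 x))
  (le_f2f3 : forall x, le (f2 x) (f3 x)) (le_x0f3 : forall x, le x0 (f3 x)).

(* At each breakpoint the path takes the larger adjacent map, which makes it continuous
   for the down-set topology. *)
Definition zigzag_path (t : R) : T -> T :=
  if t < 4^-1 then id else if t == 4^-1 then f1 else
  if t < 3 / 4 then f2 else if t == 3 / 4 then f3 else fun=> x0.

Lemma zigzag_path_lt s : s < 4^-1 -> zigzag_path s = id.
Proof. by rewrite /zigzag_path => ->. Qed.

Lemma zigzag_path_quarter : zigzag_path 4^-1 = f1.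
Proof. by rewrite /zigzag_path ltxx eqxx. Qed.

Lemma zigzag_path_mid s : 4^-1 < s < 3 / 4 -> zigzag_path s = f2.
Proof. by rewrite /zigzag_path => /andP[gt1 ->]; rewrite ltNge (ltW gt1) gt_eqF. Qed.

Lemma zigzag_path_three_quarters : zigzag_path (3 / 4) = f3.
Proof.
have [gt1 ne1] : ((3 / 4 : R) < 4^-1) = false /\ ((3 / 4 : R) == 4^-1) = false.
  by split; [apply/negbTE; rewrite -leNgt|apply/negbTE/eqP]; lra.
by rewrite /zigzag_path gt1 ne1 ltxx eqxx.
Qed.

Lemma zigzag_path_gt s : 3 / 4 < s -> zigzag_path s = fun=> x0.
Proof.
move=> gt3; have gt1 : 4^-1 < s by lra.
by rewrite /zigzag_path ltNge (ltW gt1) gt_eqF // ltNge (ltW gt3) gt_eqF.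
Qed.

Lemma open_between (a b : R) : open ([set s | a < s] `&` [set s | s < b]).
Proof. by apply: openI; [apply: open_gt|apply: open_lt]. Qed.

Lemma zigzag_path_local t : exists2 B : set R, open B /\ B t &
  forall s x, B s -> le (zigzag_path s x) (zigzag_path t x).
Proof.
have [lt1 | gt1 | ->] := ltgtP t 4^-1.
- exists [set s | s < 4^-1]; first by split; first exact: open_lt.
  by move=> s x /= lts; rewrite !zigzag_path_lt.
- have [lt3 | gt3 | ->] := ltgtP t (3 / 4).
  + exists ([set s | 4^-1 < s] `&` [set s | s < 3 / 4]); first by split; first exact: open_between.
    by move=> s x [/= gts lts]; rewrite !zigzag_path_mid ?gts ?lts ?gt1.
  + exists [set s | 3 / 4 < s]; first by split; first exact: open_gt.
    by move=> s x /= gts; rewrite !zigzag_path_gt.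
  exists ([set s | 2^-1 < s] `&` [set s | s < 1]); first by split; [exact: open_between|split=> /=; lra].
  move=> s x [/= gt2 lt1]; rewrite zigzag_path_three_quarters.
  have [lts | gts | ->] := ltgtP s (3 / 4); last by rewrite zigzag_path_three_quarters.
    by rewrite zigzag_path_mid //; apply/andP; split=> //; lra.
  by rewrite zigzag_path_gt.
exists ([set s | 0 < s] `&` [set s | s < 2^-1]); first by split; [exact: open_between|split=> /=; lra].
move=> s x [/= gt0 lt2]; rewrite zigzag_path_quarter.
have [lts | gts | ->] := ltgtP s 4^-1; last by rewrite zigzag_path_quarter.
  by rewrite zigzag_path_lt.
by rewrite zigzag_path_mid //; apply/andP; split=> //; lra.
Qed.

Lemma alexandrov_zigzag_contractible : contractible X.
Proof.
exists x0, (fun z : X * R => zigzag_path z.2 z.1 : X); split; last first.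
  split=> x; rewrite /zigzag_path; first by have -> : (0 : R) < 4^-1 by lra.
  have [ge1 ge3] : ((1 : R) < 4^-1) = false /\ ((1 : R) < 3 / 4) = false.
    by split; apply/negbTE; rewrite -leNgt; lra.
  have [ne1 ne3] : ((1 : R) == 4^-1) = false /\ ((1 : R) == 3 / 4) = false.
    by split; apply/negbTE/eqP; lra.
  by rewrite ge1 ne1 ge3 ne3.
apply/continuous_subspaceT/alexandrov_continuous_family.
  move=> s x y le_xy; rewrite /zigzag_path.
  by do 4?case: ifP => _; [|exact: homo_f1|exact: homo_f2|exact: homo_f3|exact: le_rr].
exact: zigzag_path_local.
Qed.

End AlexandrovHomotopy.

Section OmegaCenter.
(* classical_sets shadows finset lemmas such as subset_trans and subsetI. *)
Import mathcomp.boot.fintype mathcomp.boot.finset mathcomp.solvable.center.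
Local Open Scope group_scope.
Variables (gT : finGroupType) (p : nat).
Implicit Types (A : {set gT}) (H K M Q R S W X Y : {group gT}).

Definition OmZ Q : {group gT} := ('Ohm_1('Z(Q)))%G.

Lemma centerJ A x : 'Z(A :^ x) = 'Z(A) :^ x.
Proof. by rewrite /center conjIg centJ. Qed.

Lemma OmZJ Q x : OmZ (Q :^ x)%G = (OmZ Q :^ x)%G.
Proof. by apply: val_inj; rewrite /= centerJ OhmJ. Qed.

Lemma OmZ_subZ Q : OmZ Q \subset 'Z(Q).
Proof. exact: Ohm_sub. Qed.

Lemma OmZ_sub Q : OmZ Q \subset Q.
Proof. exact: subset_trans (OmZ_subZ Q) (center_sub Q). Qed.

Lemma OmZ_abelem Q : p.-group Q -> p.-abelem (OmZ Q).
Proof. by move=> pQ; apply: Ohm1_abelem (pgroupS (center_sub Q) pQ) (center_abelian Q). Qed.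

Lemma OmZ_neq1 Q : p.-group Q -> Q :!=: 1 -> OmZ Q :!=: 1.
Proof. by move=> pQ; apply: contra; rewrite /OmZ /= Ohm1_eq1 => /eqP/(trivg_center_pgroup pQ)->. Qed.

Lemma cents_OmZ Q A : A \subset Q -> A \subset 'C(OmZ Q).
Proof.
move=> sAQ; rewrite centsC; apply: subset_trans (OmZ_subZ Q) _.
exact: subset_trans (subsetIr _ _) (centS sAQ).
Qed.

Lemma norm_OmZ Q : 'N(Q) \subset 'N(OmZ Q).
Proof. exact/char_norms/(char_trans (Ohm_char 1 _) (center_char Q)). Qed.

Lemma abelian_sub_center_Sylow_cent H X S : X \subset H -> p.-group X -> abelian X ->
  p.-Sylow('C_H(X)) S -> X \subset 'Z(S).
Proof.
move=> sXH pX cXX sylS.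
have sXC : X \subset 'C_H(X) by rewrite subsetI sXH.
have nXC : normal X 'C_H(X) by rewrite /normal sXC (subset_trans (subsetIr _ _) (cent_sub _)).
rewrite /center subsetI (normal_sub_max_pgroup (Hall_max sylS) pX nXC) centsC.
exact: subset_trans (pHall_sub sylS) (subsetIr _ _).
Qed.

Lemma abelem_sub_OmZ_Sylow_cent H X S : X \subset H -> p.-abelem X ->
  p.-Sylow('C_H(X)) S -> X \subset OmZ S.
Proof.
move=> sXH abX sylS; rewrite -(Ohm1_id abX) OhmS //.
exact: abelian_sub_center_Sylow_cent sXH (abelem_pgroup abX) (abelem_abelian abX) sylS.
Qed.

Lemma center_sub_Sylow_cent H X S R : p.-Sylow('C_H(X)) S -> p.-group R ->
  S \subset R -> R \subset H -> X \subset S -> 'Z(R) \subset 'Z(S).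
Proof.
move=> sylS pR sSR sRH sXS.
have sZC : 'Z(R) \subset 'C(X).
  exact: subset_trans (subsetIr _ _) (centS (subset_trans sXS sSR)).
have sSRC : S \subset R :&: 'C(X).
  by rewrite subsetI sSR (subset_trans (pHall_sub sylS) (subsetIr _ _)).
have eS := sub_pHall sylS (pgroupS (subsetIl _ _) pR) sSRC (setSI _ sRH).
rewrite /center subsetI -{1}eS subsetI center_sub sZC.
exact: subset_trans (subsetIr _ _) (centS sSR).
Qed.

Lemma OmZ_sub_Sylow_cent H X S R : p.-Sylow('C_H(X)) S -> p.-group R ->
  S \subset R -> R \subset H -> X \subset S -> OmZ R \subset OmZ S.
Proof. by move=> sylS pR sSR sRH sXS; apply/OhmS/(center_sub_Sylow_cent sylS). Qed.

Lemma Sylow_superset_cent_OmZ H R W : p.-Sylow(H) R -> p.-group W ->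
  W \subset 'C_H(OmZ R) -> exists R0 : {group gT},
  [/\ p.-Sylow(H) R0, W \subset R0 & OmZ R0 :=: OmZ R].
Proof.
move=> sylR pW sWC; have [R0 sylR0 sWR0] := Sylow_superset sWC pW.
have sRC : R \subset 'C_H(OmZ R) by rewrite subsetI (pHall_sub sylR) cents_OmZ.
have [y /setIP[Hy cOmZy] eR0] := Sylow_trans (pHall_subl sRC (subsetIl _ _) sylR) sylR0.
exists R0; split=> //; first by rewrite eR0 pHallJ.
by rewrite /= eR0 centerJ OhmJ (normP (subsetP (cent_sub _) y cOmZy)).
Qed.

Lemma Sylow_subcent H R A : p.-Sylow(H) R -> R \subset 'C(A) -> p.-Sylow('C_H(A)) R.
Proof. by move=> sylR cRA; rewrite (pHall_subl _ _ sylR) ?subsetIl // subsetI (pHall_sub sylR). Qed.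

Lemma Sylow_subgroup_Sylow H K R : H \subset K -> p.-Sylow(K) R -> R \subset H ->
  forall Q, p.-Sylow(H) Q -> p.-Sylow(K) Q.
Proof.
move=> sHK sylR sRH Q sylQ.
have [h Hh ->] := Sylow_trans (pHall_subl sRH sHK sylR) sylQ.
by rewrite pHallJ // (subsetP sHK).
Qed.

Hypothesis p_pr : prime p.

Lemma abelem_rank_eq X Y : X \subset Y -> p.-abelem Y -> 'r_p(Y) <= 'r_p(X) -> X :=: Y.
Proof.
move=> sXY abY leYX; have abX := abelemS sXY abY.
apply/eqP; rewrite eqEcard sXY (card_pgroup (abelem_pgroup abX)).
rewrite (card_pgroup (abelem_pgroup abY)) -(p_rank_abelem abX) -(p_rank_abelem abY).
by rewrite leq_pexp2l ?prime_gt0.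
Qed.

Lemma abelem_rank_lt X Y : X \subset Y -> p.-abelem Y -> X :!=: Y -> 'r_p(X) < 'r_p(Y).
Proof.
move=> sXY abY; apply: contraNT; rewrite -leqNgt => leYX.
by rewrite (abelem_rank_eq sXY abY leYX).
Qed.

Lemma abelem_join_eq M X Y n : X \subset M -> Y \subset M -> p.-abelem M ->
  'r_p(X) = n -> 'r_p(Y) = n -> 'r_p(M) = n.+1 -> X :!=: Y -> X <*> Y = M.
Proof.
move=> sXM sYM abM rX rY rM neXY.
have sXYM : X <*> Y \subset M by rewrite join_subG sXM.
have neX : X :!=: X <*> Y.
  apply: contraNneq neXY => eX; apply/eqP/esym/(abelem_rank_eq _ (abelemS sXM abM)).
    by rewrite eX joing_subr.
  by rewrite rX rY.
have := abelem_rank_lt (joing_subl X Y) (abelemS sXYM abM) neX.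
by rewrite rX -rM => /(abelem_rank_eq sXYM abM).
Qed.

Lemma Sylow_eq_normI_sub K W R : p.-Sylow(K) W -> p.-group R -> W \subset R ->
  R :&: 'N(W) \subset K -> R :=: W.
Proof.
move=> sylW pR sWR sNK.
have sWN : W \subset R :&: 'N(W) by rewrite subsetI sWR normG.
apply: nilpotent_sub_norm (pgroup_nil pR) sWR _.
by rewrite (sub_pHall sylW (pgroupS (subsetIl _ _) pR) sWN sNK).
Qed.

End OmegaCenter.

Section RankCondition.
Import mathcomp.boot.fintype mathcomp.boot.finset.
Local Open Scope group_scope.
Variables (gT : finGroupType) (G P : {group gT}) (p : nat).
Implicit Types (A : {set gT}) (E F H M Q R S V W : {group gT}).
Hypotheses (p_pr : prime p) (sylP : p.-Sylow(G) P).
Let r := 'r_p(OmZ P).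
Hypothesis rankG : 'r_p(G) <= r.+1.

Lemma Sylow_OmZ_conj R : p.-Sylow(G) R -> exists2 x, x \in G & OmZ R :=: OmZ P :^ x.
Proof. by move=> /(Sylow_trans sylP)[x Gx eR]; exists x; rewrite //= eR centerJ OhmJ. Qed.

Lemma Sylow_OmZ_rank R : p.-Sylow(G) R -> 'r_p(OmZ R) = r.
Proof. by move=> /Sylow_OmZ_conj[x _ ->]; rewrite p_rankJ. Qed.

Lemma rank_le_OmZ_succ A : A \subset G -> 'r_p(A) <= r.+1.
Proof. by move=> sAG; apply: leq_trans (p_rankS p sAG) rankG. Qed.

Definition below_OmZ E := [exists x in G, E \subset OmZ P :^ x].

Lemma below_OmZJ E g : g \in G -> below_OmZ (E :^ g)%G = below_OmZ E.
Proof.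
move=> Gg; apply/exists_inP/exists_inP => [[x Gx sEx]|[x Gx sEx]].
  by exists (x * g^-1); rewrite ?groupM ?groupV // conjsgM -sub_conjg.
by exists (x * g); rewrite ?groupM // conjsgM conjSg.
Qed.

Lemma below_OmZS E F : E \subset F -> below_OmZ F -> below_OmZ E.
Proof. by move=> sEF /exists_inP[x Gx sFx]; apply/exists_inP; exists x; rewrite // (subset_trans sEF). Qed.

Lemma below_OmZ_Sylow E S : E \subset G -> p.-abelem E -> p.-Sylow('C_G(E)) S ->
  below_OmZ E = p.-Sylow(G) S.
Proof.
move=> sEG abE sylS; apply/idP/idP => [/exists_inP[x Gx sEx]|sylSG].
  have sylPx : p.-Sylow(G) (P :^ x)%G by rewrite pHallJ.
  have sPxC : P :^ x \subset 'C_G(E).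
    rewrite subsetI (pHall_sub sylPx) centsC; apply: subset_trans sEx _.
    by rewrite centJ conjSg centsC cents_OmZ.
  have [S' sylS' sPxS'] := Sylow_superset sPxC (pHall_pgroup sylPx).
  have sS'G : S' \subset G := subset_trans (pHall_sub sylS') (subsetIl _ _).
  have eS' := sub_pHall sylPx (pHall_pgroup sylS') sPxS' sS'G.
  have [y /setIP[Gy _] ->] := Sylow_trans sylS' sylS.
  by rewrite eS' -conjsgM pHallJ ?groupM.
have [x Gx eS] := Sylow_OmZ_conj sylSG.
by apply/exists_inP; exists x; rewrite // -eS (abelem_sub_OmZ_Sylow_cent sEG abE sylS).
Qed.

Lemma OmZ_Sylow_cent_rank E S : E \subset G -> p.-abelem E -> p.-Sylow('C_G(E)) S ->
  'r_p(OmZ S) = (if below_OmZ E then r else r.+1).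
Proof.
move=> sEG abE sylS; have := below_OmZ_Sylow sEG abE sylS.
case: ifP => [_ /esym/Sylow_OmZ_rank //|notbelow nsylS].
have sSG : S \subset G := subset_trans (pHall_sub sylS) (subsetIl _ _).
have [R sylR sSR] := Sylow_superset sSG (pHall_pgroup sylS).
have sES := abelem_sub_OmZ_Sylow_cent sEG abE sylS.
have sOmZ := OmZ_sub_Sylow_cent sylS (pHall_pgroup sylR) sSR (pHall_sub sylR)
  (subset_trans sES (OmZ_sub S)).
apply/eqP; rewrite eqn_leq rank_le_OmZ_succ ?(subset_trans (OmZ_sub S)) //=.
rewrite -(Sylow_OmZ_rank sylR) ltnNge; apply: contraFN notbelow => leOmZ.
have [x Gx eR] := Sylow_OmZ_conj sylR.
apply/exists_inP; exists x; rewrite // -eR.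
by rewrite (abelem_rank_eq p_pr sOmZ (OmZ_abelem (pHall_pgroup sylS)) leOmZ).
Qed.

Section NormalizerConjugacy.
Variables H M : {group gT}.
Hypotheses (sHG : H \subset G) (sylHG : forall R, p.-Sylow(H) R -> p.-Sylow(G) R).
Hypotheses (sMH : M \subset H) (abM : p.-abelem M) (rankM : 'r_p(M) = r.+1).

Lemma OmZ_Sylow_centM Q : p.-Sylow('C_H(M)) Q -> OmZ Q :=: M.
Proof.
move=> sylQ; have sMQ := abelem_sub_OmZ_Sylow_cent sMH abM sylQ.
apply/esym/(abelem_rank_eq p_pr sMQ (OmZ_abelem (pHall_pgroup sylQ))).
rewrite rankM rank_le_OmZ_succ // (subset_trans (OmZ_sub Q)) //.
by rewrite (subset_trans (pHall_sub sylQ)) // (subset_trans (subsetIl _ _)).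
Qed.

Lemma norm_Sylow_centM Q : p.-Sylow('C_H(M)) Q -> 'N(Q) \subset 'N(M).
Proof. by move=> sylQ; rewrite -(OmZ_Sylow_centM sylQ) norm_OmZ. Qed.

Lemma Sylow_centM_of_normM V : p.-Sylow(H :&: 'N(M)) V -> p.-Sylow('C_H(M)) ('C_H(M) :&: V).
Proof. exact: Sylow_setI_normal (subcent_normal H M). Qed.

Lemma OmZ_Sylow_sub V R : p.-Sylow(H :&: 'N(M)) V -> p.-Sylow(H) R -> V \subset R ->
  OmZ R \subset M.
Proof.
move=> sylV sylR sVR; have sylQ := Sylow_centM_of_normM sylV.
have sMQ : M \subset 'C_H(M) :&: V.
  apply: subset_trans (center_sub _).
  exact: abelian_sub_center_Sylow_cent sMH (abelem_pgroup abM) (abelem_abelian abM) sylQ.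
have sQR : 'C_H(M) :&: V \subset R := subset_trans (subsetIr _ _) sVR.
rewrite -(OmZ_Sylow_centM sylQ).
exact: OmZ_sub_Sylow_cent sylQ (pHall_pgroup sylR) sQR (pHall_sub sylR) sMQ.
Qed.

Lemma OmZ_Sylow_join R1 R2 : p.-Sylow(H) R1 -> p.-Sylow(H) R2 ->
  OmZ R1 \subset M -> OmZ R2 \subset M -> OmZ R1 :!=: OmZ R2 -> OmZ R1 <*> OmZ R2 = M.
Proof.
move=> sylR1 sylR2 sR1M sR2M.
by apply: (abelem_join_eq p_pr) sR1M sR2M abM _ _ rankM; apply: Sylow_OmZ_rank; apply: sylHG.
Qed.

Lemma OmZ_Sylow_normM_eq V R1 R2 : p.-Sylow(H :&: 'N(M)) V -> p.-Sylow(H) R1 ->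
  p.-Sylow(H) R2 -> V \subset R1 -> V \subset R2 -> OmZ R1 :=: OmZ R2.
Proof.
move=> sylV sylR1 sylR2 sVR1 sVR2; apply/eqP; apply: contraT => neOmZ.
have eM := OmZ_Sylow_join sylR1 sylR2 (OmZ_Sylow_sub sylV sylR1 sVR1)
  (OmZ_Sylow_sub sylV sylR2 sVR2) neOmZ.
have sVC : V \subset 'C_H(M).
  rewrite subsetI (subset_trans (pHall_sub sylV) (subsetIl _ _)) -eM centY.
  by rewrite subsetI !cents_OmZ.
have sylVC : p.-Sylow('C_H(M)) V.
  by have := Sylow_centM_of_normM sylV; rewrite (setIidPr sVC).
have eqV R : p.-Sylow(H) R -> V \subset R -> R :=: V.
  move=> sylR sVR; apply: Sylow_eq_normI_sub sylV (pHall_pgroup sylR) sVR _.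
  exact: setISS (pHall_sub sylR) (norm_Sylow_centM sylVC).
by case/eqP: neOmZ; rewrite /= (eqV _ sylR1 sVR1) (eqV _ sylR2 sVR2).
Qed.

Lemma OmZ_Sylow_through_normM R : p.-Sylow(H) R -> OmZ R \subset M ->
  exists V : {group gT}, exists R' : {group gT},
    [/\ p.-Sylow(H :&: 'N(M)) V, p.-Sylow(H) R', V \subset R' & OmZ R' :=: OmZ R].
Proof.
move=> sylR sOmZM; pose L := ('C_H(OmZ R) :&: 'N(M))%G.
have [W sylW] := Sylow_exists p L; have pW := pHall_pgroup sylW.
have sWC : W \subset 'C_H(OmZ R) := subset_trans (pHall_sub sylW) (subsetIl _ _).
have [R0 [sylR0 sWR0 eR0]] := Sylow_superset_cent_OmZ sylR pW sWC.
have sWN : W \subset (H :&: 'N(M)).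
  by apply: subset_trans (pHall_sub sylW) _; apply/setSI/subsetIl.
have [V sylV sWV] := Sylow_superset sWN pW; have pV := pHall_pgroup sylV.
have sVH : V \subset H := subset_trans (pHall_sub sylV) (subsetIl _ _).
have [R1 sylR1 sVR1] := Sylow_superset sVH pV.
have [eR1|neR1] := eqVneq (OmZ R : {set gT}) (OmZ R1).
  by exists V, R1; split=> //; rewrite eR1.
(* Omega(R) and Omega(R1) generate M, so W is a Sylow subgroup of C_H(M), hence
   self-normalizing in R0 and thus Sylow in H. *)
have eM := OmZ_Sylow_join sylR sylR1 sOmZM (OmZ_Sylow_sub sylV sylR1 sVR1) neR1.
have eW : V :&: 'C(OmZ R) = W.
  have sVL : V :&: 'C(OmZ R) \subset L.
    apply/subsetP => z /setIP[Vz cz]; have /setIP[Hz Nz] := subsetP (pHall_sub sylV) z Vz.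
    by apply/setIP; split=> //; apply/setIP.
  have sWVC : W \subset V :&: 'C(OmZ R) by rewrite subsetI sWV (subset_trans sWC (subsetIr _ _)).
  by rewrite (sub_pHall sylW (pgroupS (subsetIl _ _) pV) sWVC sVL).
have eCW : 'C_H(M) :&: V = W.
  rewrite -eW -eM centY; apply/setP => z; rewrite !inE andbC.
  case Vz: (z \in V) => //=.
  by rewrite (subsetP sVH z Vz) (subsetP (cents_OmZ sVR1) z Vz) andbT.
have sylWC : p.-Sylow('C_H(M)) W by rewrite -eCW; apply: Sylow_centM_of_normM.
have sR0C : R0 \subset 'C_H(OmZ R) by rewrite -eR0 subsetI (pHall_sub sylR0) cents_OmZ.
have eR0W : R0 :=: W.
  exact: Sylow_eq_normI_sub sylW (pHall_pgroup sylR0) sWR0 (setISS sR0C (norm_Sylow_centM sylWC)).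
have sylWH : p.-Sylow(H) W by rewrite -eR0W.
have eVW : V :=: W := sub_pHall sylWH pV sWV sVH.
by exists V, R0; split; rewrite // eVW.
Qed.

Lemma OmZ_Sylow_conj_normM R1 R2 : p.-Sylow(H) R1 -> p.-Sylow(H) R2 ->
  OmZ R1 \subset M -> OmZ R2 \subset M ->
  exists2 n, n \in H :&: 'N(M) & (OmZ R1 :^ n)%G = OmZ R2.
Proof.
move=> sylR1 sylR2 sR1M sR2M.
have [V1 [R1' [sylV1 sylR1' sVR1' eR1']]] := OmZ_Sylow_through_normM sylR1 sR1M.
have [V2 [R2' [sylV2 sylR2' sVR2' eR2']]] := OmZ_Sylow_through_normM sylR2 sR2M.
have [n /setIP[Hn Nn] eV2] := Sylow_trans sylV1 sylV2.
have sylR1n : p.-Sylow(H) (R1' :^ n)%G by rewrite pHallJ.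
have sVR1n : V2 \subset (R1' :^ n)%G by rewrite eV2 conjSg.
have eOmZ := OmZ_Sylow_normM_eq sylV2 sylR1n sylR2' sVR1n sVR2'.
exists n; first exact/setIP.
by apply: val_inj; rewrite /= -eR1' -eR2' -eOmZ OmZJ.
Qed.

End NormalizerConjugacy.

End RankCondition.

Section Chains.
Import mathcomp.boot.fintype mathcomp.boot.finset.
Local Open Scope group_scope.
Variables (gT : finGroupType) (G : {group gT}) (p : nat).
Implicit Types (E F M t : {group gT}) (c d : {set {group gT}}).
Local Notation chain := (is_Ap_chain G p).

Lemma mem_Ap E : reflect [/\ E \subset G, p.-abelem E & E :!=: 1%G] (E \in Ap G p).
Proof.
rewrite inE; apply: (iffP andP) => [[/pElemP[sEG abE] ntE]|[sEG abE ntE]] //.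
by split=> //; apply/pElemP.
Qed.

Lemma is_Ap_chainP c : reflect
  [/\ exists E, E \in c, {subset c <= Ap G p} &
      {in c &, forall E F, (E \subset F) || (F \subset E)}] (chain c).
Proof.
apply: (iffP and3P) => [[/card_gt0P ne /subsetP sc /forall_inP cmp]|[ne sc cmp]].
  by split=> // E F /cmp /forall_inP; apply.
split; first exact/card_gt0P.
  exact/subsetP.
by apply/forall_inP => E Ec; apply/forall_inP => F Fc; apply: cmp.
Qed.

Lemma Ap_chain1 E : E \in Ap G p -> chain [set E].
Proof.
move=> ApE; apply/is_Ap_chainP; split; first by exists E; rewrite inE.
  by move=> F /set1P ->.
by move=> F1 F2 /set1P -> /set1P ->; rewrite subxx.
Qed.

Lemma Ap_chainU1 c M : M \in Ap G p -> {in c, forall E, E \subset M} ->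
  (c == set0) || chain c -> chain (M |: c).
Proof.
move=> ApM sM /orP[/eqP-> | /is_Ap_chainP[_ sc cmp]]; first by rewrite setU0 Ap_chain1.
apply/is_Ap_chainP; split; first by exists M; rewrite setU11.
  by move=> E /setU1P[-> | /sc].
move=> E F /setU1P[-> | Ec] /setU1P[-> | Fc]; rewrite ?subxx ?sM ?orbT //.
exact: cmp.
Qed.

Lemma Ap_chain_subset c d : chain c -> d \subset c -> (d == set0) || chain d.
Proof.
move=> /is_Ap_chainP[_ sc cmp] /subsetP sdc.
have [-> | [E Ed]] := set_0Vmem d; first by rewrite eqxx.
apply/orP; right; apply/is_Ap_chainP; split; first by exists E.
  by move=> F /sdc /sc.
by move=> F1 F2 /sdc F1c /sdc F2c; apply: cmp.
Qed.

Definition is_top c t := t \in c /\ {in c, forall E, E \subset t}.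

Lemma chain_top c : chain c -> exists t, is_top c t.
Proof.
move=> /is_Ap_chainP[[E0 E0c] _ cmp].
have [t tc maxt] := arg_maxnP (fun E : {group gT} => #|E|) E0c.
exists t; split=> // E Ec; case/orP: (cmp E t Ec tc) => // stE.
have /eqP-> : (t : {set gT}) == E by rewrite eqEcard stE; apply: maxt.
exact: subxx.
Qed.

Lemma is_top_uniq c t t' : is_top c t -> is_top c t' -> t = t'.
Proof. by move=> [tc st] [t'c st']; apply/val_inj/eqP; rewrite eqEsubset st' ?st. Qed.

Lemma is_top_subset c c' t t' : c \subset c' -> is_top c t -> is_top c' t' -> t \subset t'.
Proof. by move=> /subsetP scc' [tc _] [_ st']; apply/st'/scc'. Qed.

Lemma mem_conj_chain c E g : E \in c -> (E :^ g)%G \in conj_chain c g.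
Proof. exact: imset_f. Qed.

Lemma conj_chainP c g F : F \in conj_chain c g -> exists2 E, E \in c & F = (E :^ g)%G.
Proof. by move=> /imsetP. Qed.

Lemma conj_chainU1 c E g : conj_chain (E |: c) g = (E :^ g)%G |: conj_chain c g.
Proof. exact: imsetU1. Qed.

Lemma conj_chain_set1 E g : conj_chain [set E] g = [set (E :^ g)%G].
Proof. exact: imset_set1. Qed.

Lemma conj_chainM c g h : conj_chain (conj_chain c g) h = conj_chain c (g * h).
Proof. by rewrite /conj_chain -imset_comp; apply: eq_imset => E; apply: val_inj; rewrite /= conjsgM. Qed.

Lemma conj_chain_id c g : {in c, forall E, g \in 'N(E)} -> conj_chain c g = c.
Proof.
move=> nc; rewrite /conj_chain -[RHS]imset_id; apply: eq_in_imset => E Ec.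
by apply: val_inj; rewrite /= (normP (nc E Ec)).
Qed.

Lemma conj_chain1 c : conj_chain c 1 = c.
Proof. by apply: conj_chain_id => E _; apply: group1. Qed.

Lemma conj_chain_cent c (A : {set gT}) g :
  {in c, forall E, E \subset A} -> g \in 'C(A) -> conj_chain c g = c.
Proof.
move=> st cgt; apply: conj_chain_id => E Ec.
exact: subsetP (cent_sub E) g (subsetP (centS (st E Ec)) g cgt).
Qed.

Lemma is_topJ c t g : is_top c t -> is_top (conj_chain c g) (t :^ g)%G.
Proof.
move=> [tc st]; split; first exact: mem_conj_chain.
by move=> F /conj_chainP[E Ec ->]; rewrite conjSg st.
Qed.

Lemma Ap_conj_chain c g : g \in G -> chain c -> chain (conj_chain c g).
Proof.
move=> Gg /is_Ap_chainP[[E Ec] sc cmp]; apply/is_Ap_chainP; split.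
- by exists (E :^ g)%G; apply: mem_conj_chain.
- move=> F /conj_chainP[E' E'c ->]; have /mem_Ap[sEG abE ntE] := sc E' E'c.
  by apply/mem_Ap; rewrite /= conj_subG ?abelemJ ?conjsg_eq1.
move=> F1 F2 /conj_chainP[E1 E1c ->] /conj_chainP[E2 E2c ->] /=.
by rewrite !conjSg; apply: cmp.
Qed.

Lemma mem_chain_orbit c g : g \in G -> conj_chain c g \in chain_orbit G c.
Proof. exact: imset_f. Qed.

Lemma chain_orbit_refl c : c \in chain_orbit G c.
Proof. by rewrite -{1}(conj_chain1 c) mem_chain_orbit. Qed.

End Chains.

Section OrbitMaps.
Import mathcomp.boot.fintype mathcomp.boot.finset.
Local Open Scope group_scope.
Variables (gT : finGroupType) (G : {group gT}) (p : nat).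
Local Notation chain := (is_Ap_chain G p).
Local Notation point := (Ap_orbit_pt G p).
Local Notation chain_rel := ({set {group gT}} -> {set {group gT}} -> Prop).
Implicit Types (c d : {set {group gT}}) (O : point) (R : chain_rel).

Lemma Ap_orbit_ptP O : exists2 c, chain c & val O = chain_orbit G c.
Proof. by case: O => /= O /imsetP[c]; rewrite inE => cc ->; exists c. Qed.

Lemma Ap_orbit_pt_of c : chain c -> exists O : point, val O = chain_orbit G c.
Proof.
move=> cc; have Oc : chain_orbit G c \in Ap_chain_orbits G p by apply: imset_f; rewrite inE.
by exists (exist (fun O : {set {set {group gT}}} => O \in Ap_chain_orbits G p) _ Oc).
Qed.

Lemma Ap_orbit_pt_conj O c g : c \in val O -> g \in G -> conj_chain c g \in val O.
Proof.
have [c0 _ ->] := Ap_orbit_ptP O => /imsetP[h Gh ->] Gg.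
by rewrite conj_chainM mem_chain_orbit ?groupM.
Qed.

Lemma Ap_orbit_pt_chain O c : c \in val O -> chain c.
Proof. by have [c0 cc0 ->] := Ap_orbit_ptP O => /imsetP[h Gh ->]; apply: Ap_conj_chain. Qed.

Lemma Ap_orbit_le_refl : reflexive (@Ap_orbit_le gT G p).
Proof.
move=> O; have [c _ eO] := Ap_orbit_ptP O.
have cO : c \in val O by rewrite eO chain_orbit_refl.
by apply/exists_inP; exists c => //; apply/exists_inP; exists c.
Qed.

Definition realizes (f : point -> point) R :=
  forall O c, c \in val O -> exists2 d, d \in val (f O) & R c d.

Definition conj_invariant R :=
  forall c d g, g \in G -> R c d -> R (conj_chain c g) (conj_chain d g).

Lemma realizing_map_exists R : conj_invariant R ->
  (forall c, chain c -> exists2 d, chain d & R c d) -> exists f, realizes f R.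
Proof.
move=> RJ Rtot.
suff [f fR] : exists f : point -> point, forall O,
    exists c, exists2 d, c \in val O /\ d \in val (f O) & R c d.
  exists f => O c cO; have [c0 [d0 [c0O d0f] Rcd0]] := fR O.
  have [c1 _ eO] := Ap_orbit_ptP O; rewrite eO in c0O cO.
  case/imsetP: c0O Rcd0 => g Gg -> Rcd0; case/imsetP: cO => h Gh ->.
  exists (conj_chain d0 (g^-1 * h)); first by rewrite Ap_orbit_pt_conj ?groupM ?groupV.
  by have := RJ _ _ _ (groupM (groupVr Gg) Gh) Rcd0; rewrite conj_chainM mulKVg.
apply: (@fin_all_exists point (fun=> point)
  (fun O Q => exists c, exists2 d, c \in val O /\ d \in val Q & R c d)) => O.
have [c cc eO] := Ap_orbit_ptP O.
have [d dc Rcd] := Rtot c cc; have [Q eQ] := Ap_orbit_pt_of dc.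
by exists Q, c, d; rewrite ?eO ?eQ ?chain_orbit_refl.
Qed.

Lemma realizes_id : realizes id (fun c d => d = c).
Proof. by move=> O c cO; exists c. Qed.

Lemma realizes_const O0 c0 : val O0 = chain_orbit G c0 ->
  realizes (fun=> O0) (fun _ d => d = c0).
Proof. by move=> eO0 O c _; exists c0; rewrite ?eO0 ?chain_orbit_refl. Qed.

Lemma realizes_le f f' R R' : realizes f R -> realizes f' R' ->
  (forall c d d', chain c -> R c d -> R' c d' -> exists2 g, g \in G & conj_chain d g \subset d') ->
  forall O, Ap_orbit_le (f O) (f' O).
Proof.
move=> fR f'R cmp O; have [c cc eO] := Ap_orbit_ptP O.
have cO : c \in val O by rewrite eO chain_orbit_refl.
have [[d df Rcd] [d' d'f Rcd']] := (fR O c cO, f'R O c cO).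
have [g Gg sdd'] := cmp c d d' cc Rcd Rcd'.
by apply/exists_inP; exists (conj_chain d g); rewrite ?Ap_orbit_pt_conj //; apply/exists_inP; exists d'.
Qed.

Lemma le_realizes f R : realizes f R -> (forall c d, R c d -> c \subset d) ->
  forall O, Ap_orbit_le O (f O).
Proof.
move=> fR sR; apply: (realizes_le (realizes_id) fR) => c _ d _ -> /sR scd.
by exists 1; rewrite ?group1 ?conj_chain1.
Qed.

Lemma const_le_realizes f R O0 c0 : val O0 = chain_orbit G c0 -> realizes f R ->
  (forall c d, chain c -> R c d -> exists2 g, g \in G & conj_chain c0 g \subset d) ->
  forall O, Ap_orbit_le O0 (f O).
Proof. by move=> eO0 fR c0R; apply: (realizes_le (realizes_const eO0) fR) => c _ d cc ->; apply: c0R. Qed.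

Lemma realizes_homo f R : realizes f R ->
  (forall c c' d d', chain c -> chain c' -> c \subset c' -> R c d -> R c' d' ->
     exists2 g, g \in G & conj_chain d g \subset d') ->
  forall O Q, Ap_orbit_le O Q -> Ap_orbit_le (f O) (f Q).
Proof.
move=> fR mono O Q /exists_inP[c cO /exists_inP[c' c'O scc']].
have [[d df Rcd] [d' d'f Rcd']] := (fR O c cO, fR Q c' c'O).
have [g Gg sdd'] := mono c c' d d' (Ap_orbit_pt_chain cO) (Ap_orbit_pt_chain c'O) scc' Rcd Rcd'.
by apply/exists_inP; exists (conj_chain d g); rewrite ?Ap_orbit_pt_conj //; apply/exists_inP; exists d'.
Qed.

End OrbitMaps.

Section ChainRelations.
Import mathcomp.boot.fintype mathcomp.boot.finset.
Local Open Scope group_scope.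
Variables (gT : finGroupType) (G P : {group gT}) (p : nat).
Implicit Types (E F Q R S t a : {group gT}) (c d : {set {group gT}}).
Hypotheses (p_pr : prime p) (sylP : p.-Sylow(G) P) (ntOmZ : OmZ P :!=: 1%G).
Let r := 'r_p(OmZ P).
Hypothesis rankG : 'r_p(G) <= r.+1.
Local Notation chain := (is_Ap_chain G p).
Local Notation below := (below_OmZ G P).

Definition below_part c := [set E in c | below E].

Definition top_Sylow c t S := is_top c t /\ p.-Sylow('C_G(t)) S.

Lemma below_part_sub c : below_part c \subset c.
Proof. by apply/subsetP => E; rewrite inE => /andP[]. Qed.

Lemma below_partS c c' : c \subset c' -> below_part c \subset below_part c'.
Proof. by move=> /subsetP scc'; apply/subsetP => E; rewrite !inE => /andP[/scc' -> ->]. Qed.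

Lemma below_partJ c g : g \in G -> conj_chain (below_part c) g = below_part (conj_chain c g).
Proof.
move=> Gg; apply/setP => F; apply/imsetP/idP => [[E] | ].
  by rewrite inE => /andP[Ec bE] ->; rewrite inE mem_conj_chain //= below_OmZJ.
rewrite inE => /andP[/conj_chainP[E Ec ->] bEg]; exists E => //.
by rewrite inE Ec -(below_OmZJ P E Gg).
Qed.

Lemma below_part_id c t : is_top c t -> below t -> below_part c = c.
Proof.
move=> [_ st] bt; apply/setP => E; rewrite inE andb_idr // => Ec.
exact: below_OmZS (st E Ec) bt.
Qed.

Lemma conj_below_part_cent c t g : is_top c t -> g \in 'C(t) ->
  conj_chain (below_part c) g = below_part c.
Proof.
move=> [_ st]; apply: conj_chain_cent => E /(subsetP (below_part_sub c)).
exact: st.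
Qed.

Lemma Ap_top c t : chain c -> is_top c t -> t \in Ap G p.
Proof. by move=> /is_Ap_chainP[_ sc _] [tc _]; apply: sc. Qed.

Lemma top_Sylow_exists c : chain c -> exists t, exists S, top_Sylow c t S.
Proof.
by move=> /chain_top[t tc]; have [S sylS] := Sylow_exists p 'C_G(t); exists t, S.
Qed.

Lemma top_SylowJ c t S g : g \in G -> top_Sylow c t S ->
  top_Sylow (conj_chain c g) (t :^ g)%G (S :^ g)%G.
Proof.
move=> Gg [tc sylS]; split; first exact: is_topJ.
have -> : 'C_G(t :^ g) = 'C_G(t) :^ g by rewrite conjIg centJ conjGid.
by rewrite pHallJ2.
Qed.

Lemma Ap_sub_OmZ_Sylow_cent t S : t \in Ap G p -> p.-Sylow('C_G(t)) S -> t \subset OmZ S.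
Proof. by move=> /mem_Ap[sG abt _]; apply: abelem_sub_OmZ_Sylow_cent. Qed.

Lemma top_sub_OmZ c t S : chain c -> top_Sylow c t S -> {in c, forall E, E \subset OmZ S}.
Proof.
move=> cc [tc sylS] E Ec; apply: subset_trans (proj2 tc E Ec) _.
exact: Ap_sub_OmZ_Sylow_cent (Ap_top cc tc) sylS.
Qed.

Lemma OmZ_Sylow_cent_sub t S : p.-Sylow('C_G(t)) S -> OmZ S \subset G.
Proof. by move=> sylS; rewrite (subset_trans (OmZ_sub S)) // (subset_trans (pHall_sub sylS)) ?subsetIl. Qed.

Lemma OmZ_Sylow_cent_Ap t S : t \in Ap G p -> p.-Sylow('C_G(t)) S -> OmZ S \in Ap G p.
Proof.
move=> Apt sylS; have /mem_Ap[_ _ ntt] := Apt; apply/mem_Ap; split.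
- exact: OmZ_Sylow_cent_sub sylS.
- exact: OmZ_abelem (pHall_pgroup sylS).
apply: contraNneq ntt => OmZ1; apply/eqP/trivgP.
by rewrite -[1%g]/(gval 1%G) -OmZ1 Ap_sub_OmZ_Sylow_cent.
Qed.

Lemma OmZ_Sylow_Ap R : p.-Sylow(G) R -> OmZ R \in Ap G p.
Proof.
move=> sylR; have [x Gx eR] := Sylow_OmZ_conj sylP sylR; apply/mem_Ap; split.
- by rewrite eR conj_subG // (subset_trans (OmZ_sub P) (pHall_sub sylP)).
- exact: OmZ_abelem (pHall_pgroup sylR).
by rewrite /= eR conjsg_eq1.
Qed.

Lemma OmZ_top_rank t S : t \in Ap G p -> p.-Sylow('C_G(t)) S ->
  'r_p(OmZ S) = (if below t then r else r.+1).
Proof. by move=> /mem_Ap[sG abt _]; apply: OmZ_Sylow_cent_rank. Qed.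

Lemma OmZ_Sylow_cent_conj t t' S S' : t \subset t' -> t \in Ap G p -> t' \in Ap G p ->
  below t = below t' -> p.-Sylow('C_G(t)) S -> p.-Sylow('C_G(t')) S' ->
  exists2 y, y \in 'C_G(t) & (OmZ S :^ y)%G = OmZ S'.
Proof.
move=> stt' Apt Apt' bt sylS sylS'.
have sCC : 'C_G(t') \subset 'C_G(t) by apply/setIS/centS.
have [S2 sylS2 sS'S2] := Sylow_superset (subset_trans (pHall_sub sylS') sCC) (pHall_pgroup sylS').
have [y Cy eS2] := Sylow_trans sylS sylS2; exists y => //.
have sOmZ : OmZ S2 \subset OmZ S'.
  apply: (OmZ_sub_Sylow_cent sylS' (pHall_pgroup sylS2) sS'S2).
    exact: subset_trans (pHall_sub sylS2) (subsetIl _ _).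
  exact: subset_trans (Ap_sub_OmZ_Sylow_cent Apt' sylS') (OmZ_sub S').
have eS2y : OmZ S2 :=: OmZ S :^ y by rewrite /= eS2 centerJ OhmJ.
apply/val_inj/(abelem_rank_eq p_pr _ (OmZ_abelem (pHall_pgroup sylS'))); rewrite /= -eS2y //.
by rewrite eS2y p_rankJ (OmZ_top_rank Apt sylS) (OmZ_top_rank Apt' sylS') bt.
Qed.

Definition extend_rel c d := exists t S,
  top_Sylow c t S /\ d = if below t then c else OmZ S |: c.

Definition prune_rel c d := exists t S,
  top_Sylow c t S /\ d = if below t then c else OmZ S |: below_part c.

Lemma extend_relJ : conj_invariant G extend_rel.
Proof.
move=> c d g Gg [t [S [tS ->]]]; exists (t :^ g)%G, (S :^ g)%G; split; first exact: top_SylowJ.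
by rewrite below_OmZJ //; case: ifP => // _; rewrite conj_chainU1 OmZJ.
Qed.

Lemma prune_relJ : conj_invariant G prune_rel.
Proof.
move=> c d g Gg [t [S [tS ->]]]; exists (t :^ g)%G, (S :^ g)%G; split; first exact: top_SylowJ.
by rewrite below_OmZJ //; case: ifP => // _; rewrite conj_chainU1 OmZJ below_partJ.
Qed.

Lemma extend_rel_total c : chain c -> exists2 d, chain d & extend_rel c d.
Proof.
move=> cc; have [t [S tS]] := top_Sylow_exists cc.
exists (if below t then c else OmZ S |: c); last by exists t, S.
case: ifP => // _; apply: Ap_chainU1; last by rewrite cc orbT.
  exact: OmZ_Sylow_cent_Ap (Ap_top cc tS.1) tS.2.
exact: top_sub_OmZ cc tS.
Qed.

Lemma prune_rel_total c : chain c -> exists2 d, chain d & prune_rel c d.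
Proof.
move=> cc; have [t [S tS]] := top_Sylow_exists cc.
exists (if below t then c else OmZ S |: below_part c); last by exists t, S.
case: ifP => // _; apply: Ap_chainU1; last exact: Ap_chain_subset cc (below_part_sub c).
  exact: OmZ_Sylow_cent_Ap (Ap_top cc tS.1) tS.2.
by move=> E /(subsetP (below_part_sub c)); apply: (top_sub_OmZ cc tS).
Qed.

Lemma conj_OmZ_top c c' t t' S S' : chain c -> chain c' -> c \subset c' ->
  top_Sylow c t S -> top_Sylow c' t' S' -> ~~ below t ->
  [/\ ~~ below t', t \subset t' &
      exists2 y, y \in G /\ y \in 'C(t) & (OmZ S :^ y)%G = OmZ S'].
Proof.
move=> cc cc' scc' [tc sylS] [tc' sylS'] nbt.
have stt' := is_top_subset scc' tc tc'.
have nbt' : ~~ below t' by apply: contra nbt; apply: below_OmZS.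
split=> //; have bt : below t = below t' by rewrite (negbTE nbt) (negbTE nbt').
have [y /setIP[Gy cy] eOmZ] := OmZ_Sylow_cent_conj stt' (Ap_top cc tc) (Ap_top cc' tc') bt sylS sylS'.
by exists y.
Qed.

Lemma extend_rel_homo c c' d d' : chain c -> chain c' -> c \subset c' ->
  extend_rel c d -> extend_rel c' d' -> exists2 g, g \in G & conj_chain d g \subset d'.
Proof.
move=> cc cc' scc' [t [S [tS ->]]] [t' [S' [tS' ->]]].
have [bt | nbt] := boolP (below t).
  exists 1; rewrite ?group1 // conj_chain1.
  by case: ifP => _; rewrite // (subset_trans scc') ?subsetU1.
have [/negbTE-> _ [y [Gy cy] eOmZ]] := conj_OmZ_top cc cc' scc' tS tS' nbt.
exists y => //; rewrite conj_chainU1 (conj_chain_cent (proj2 tS.1) cy) eOmZ.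
exact: setUS.
Qed.

Lemma prune_rel_homo c c' d d' : chain c -> chain c' -> c \subset c' ->
  prune_rel c d -> prune_rel c' d' -> exists2 g, g \in G & conj_chain d g \subset d'.
Proof.
move=> cc cc' scc' [t [S [tS ->]]] [t' [S' [tS' ->]]].
have [bt | nbt] := boolP (below t).
  exists 1; rewrite ?group1 // conj_chain1 -(below_part_id tS.1 bt).
  case: ifP => _; first exact: subset_trans (below_partS scc') (below_part_sub c').
  exact: subset_trans (below_partS scc') (subsetU1 _ _).
have [/negbTE-> _ [y [Gy cy] eOmZ]] := conj_OmZ_top cc cc' scc' tS tS' nbt.
exists y => //; rewrite conj_chainU1 (conj_below_part_cent tS.1 cy) eOmZ.
exact/setUS/below_partS.
Qed.

Lemma extend_rel_sub c d : extend_rel c d -> c \subset d.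
Proof. by move=> [t [S [_ ->]]]; case: ifP => _; rewrite ?subsetUr. Qed.

Lemma prune_extend_rel c d d' : chain c -> prune_rel c d -> extend_rel c d' ->
  exists2 g, g \in G & conj_chain d g \subset d'.
Proof.
move=> cc [t [S [[tc sylS] ->]]] [t' [S' [[tc' sylS'] ->]]].
rewrite -(is_top_uniq tc tc') in sylS' *.
case: ifP => bt; first by exists 1; rewrite ?group1 ?conj_chain1.
have [y /setIP[Gy cy] eOmZ] := OmZ_Sylow_cent_conj (subxx t) (Ap_top cc tc) (Ap_top cc tc) erefl sylS sylS'.
exists y => //; rewrite conj_chainU1 eOmZ (conj_below_part_cent tc cy).
exact/setUS/below_part_sub.
Qed.

Definition anchor_rel c d := exists t S R,
  [/\ top_Sylow c t S, p.-Sylow(G) R, {in below_part c, forall E, R \subset 'C(E)},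
      OmZ R \subset OmZ S & d = OmZ S |: (OmZ R |: below_part c)].

Lemma anchor_relJ : conj_invariant G anchor_rel.
Proof.
move=> c d g Gg [t [S [R [tS sylR cR sRS ->]]]].
exists (t :^ g)%G, (S :^ g)%G, (R :^ g)%G; split; first exact: top_SylowJ.
- by rewrite pHallJ.
- by rewrite -below_partJ // => _ /conj_chainP[E Ec ->]; rewrite /= centJ conjSg cR.
- by rewrite !OmZJ conjSg.
by rewrite !conj_chainU1 !OmZJ below_partJ.
Qed.

Lemma sub_OmZ_Sylow_cents E R : E \in Ap G p -> p.-Sylow(G) R -> R \subset 'C(E) ->
  E \subset OmZ R.
Proof.
move=> /mem_Ap[sEG abE _] sylR cRE.
exact: abelem_sub_OmZ_Sylow_cent sEG abE (Sylow_subcent sylR cRE).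
Qed.

Lemma anchor_Sylow_exists c t S : chain c -> top_Sylow c t S -> exists R : {group gT},
  [/\ p.-Sylow(G) R, {in below_part c, forall E, R \subset 'C(E)} & OmZ R \subset OmZ S].
Proof.
move=> cc [tc sylS]; have Apt := Ap_top cc tc.
have [cA0 | [E0 E0c]] := set_0Vmem (below_part c).
  have nbt : ~~ below t.
    by apply/negP => bt; have := tc.1; rewrite -(below_part_id tc bt) cA0 inE.
  have [Q sylQ] := Sylow_exists p (G :&: 'N(OmZ S)).
  have [R sylR sQR] := Sylow_superset (subset_trans (pHall_sub sylQ) (subsetIl _ _)) (pHall_pgroup sylQ).
  exists R; split=> //; first by rewrite cA0 => E; rewrite inE.
  apply: (OmZ_Sylow_sub p_pr rankG (subxx G) _ _ _ sylQ sylR sQR).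
  - exact: OmZ_Sylow_cent_sub sylS.
  - exact: OmZ_abelem (pHall_pgroup sylS).
  by rewrite (OmZ_top_rank Apt sylS) (negbTE nbt).
have ccA : chain (below_part c).
  have /negbTE cA0 : below_part c != set0 by apply/set0Pn; exists E0.
  by have := Ap_chain_subset cc (below_part_sub c); rewrite cA0.
have [a ac] := chain_top ccA; have /mem_Ap[saG aba _] := Ap_top ccA ac.
have ba : below a by have := ac.1; rewrite inE => /andP[].
have sat : a \subset t := proj2 tc a (subsetP (below_part_sub c) a ac.1).
have [R sylRa sSR] := Sylow_superset (subset_trans (pHall_sub sylS) (setIS G (centS sat))) (pHall_pgroup sylS).
have sylR : p.-Sylow(G) R by rewrite -(below_OmZ_Sylow sylP saG aba sylRa).
exists R; split=> // [E EcA|].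
  by rewrite (subset_trans (pHall_sub sylRa)) // (subset_trans (subsetIr _ _)) ?centS ?(proj2 ac).
apply: (OmZ_sub_Sylow_cent sylS (pHall_pgroup sylR) sSR (pHall_sub sylR)).
exact: subset_trans (Ap_sub_OmZ_Sylow_cent Apt sylS) (OmZ_sub S).
Qed.

Lemma anchor_rel_total c : chain c -> exists2 d, chain d & anchor_rel c d.
Proof.
move=> cc; have [t [S tS]] := top_Sylow_exists cc.
have [R [sylR cR sRS]] := anchor_Sylow_exists cc tS.
exists (OmZ S |: (OmZ R |: below_part c)); last by exists t, S, R.
have /is_Ap_chainP[_ sc _] := cc.
apply: Ap_chainU1; first exact: OmZ_Sylow_cent_Ap (Ap_top cc tS.1) tS.2.
  by move=> E /setU1P[-> // | /(subsetP (below_part_sub c))]; apply: (top_sub_OmZ cc tS).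
apply/orP; right; apply: Ap_chainU1; first exact: OmZ_Sylow_Ap.
  move=> E EcA; apply: sub_OmZ_Sylow_cents sylR (cR E EcA).
  exact/sc/(subsetP (below_part_sub c)).
exact: Ap_chain_subset cc (below_part_sub c).
Qed.

Lemma anchor_rel_homo_below c c' t S R d' : chain c -> c \subset c' ->
  top_Sylow c t S -> below t -> p.-Sylow(G) R -> {in c, forall E, R \subset 'C(E)} ->
  OmZ R \subset OmZ S -> anchor_rel c' d' ->
  exists2 g, g \in G & conj_chain (OmZ S |: (OmZ R |: c)) g \subset d'.
Proof.
move=> cc scc' [tc sylS] bt sylR cR sRS [t' [S' [R' [_ sylR' cR' _ ->]]]].
have ct : t \in below_part c' by rewrite inE (subsetP scc') ?tc.1.
have [y /setIP[Gy cy] eR'] := Sylow_trans (Sylow_subcent sylR (cR t tc.1)) (Sylow_subcent sylR' (cR' t ct)).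
have eOmZ : OmZ S = OmZ R.
  apply/val_inj/esym/(abelem_rank_eq p_pr sRS (OmZ_abelem (pHall_pgroup sylS))).
  by rewrite (OmZ_top_rank (Ap_top cc tc) sylS) bt (Sylow_OmZ_rank sylP sylR).
have eOmZy : (OmZ R :^ y)%G = OmZ R' by apply: val_inj; rewrite -OmZJ /= eR'.
exists y => //; rewrite !conj_chainU1 eOmZ eOmZy (conj_chain_cent (proj2 tc) cy) setUA setUid.
by rewrite (subset_trans _ (subsetU1 _ _)) // setUS // -(below_part_id tc bt) below_partS.
Qed.

Lemma anchor_rel_homo_nonbelow c c' t S R d' : chain c -> chain c' -> c \subset c' ->
  top_Sylow c t S -> ~~ below t -> p.-Sylow(G) R ->
  {in below_part c, forall E, R \subset 'C(E)} -> OmZ R \subset OmZ S -> anchor_rel c' d' ->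
  exists2 g, g \in G & conj_chain (OmZ S |: (OmZ R |: below_part c)) g \subset d'.
Proof.
move=> cc cc' scc' tS nbt sylR cR sRS [t' [S' [R' [tS' sylR' cR' sRS' ->]]]].
have [nbt' stt' [y [Gy cy] eOmZS]] := conj_OmZ_top cc cc' scc' tS tS' nbt.
(* Working in C_G(X) makes every conjugating element fix below_part c. *)
pose X := \bigcup_(E in below_part c) E.
have sXt : X \subset t by apply/bigcupsP => E /(subsetP (below_part_sub c)); apply: (proj2 tS.1).
have centsX Q : {in below_part c, forall E, Q \subset 'C(E)} -> Q \subset 'C(X).
  by move=> cQ; rewrite centsC; apply/bigcupsP => E /cQ; rewrite centsC.
pose H := ('C_G(X))%G; have sHG : H \subset G := subsetIl _ _.
have sylRH : p.-Sylow(H) R := Sylow_subcent sylR (centsX R cR).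
have sylR'H : p.-Sylow(H) R'.
  by apply/(Sylow_subcent sylR')/centsX => E /(subsetP (below_partS scc')); apply: cR'.
have sylRyH : p.-Sylow(H) (R :^ y)%G by rewrite pHallJ // inE Gy (subsetP (centS sXt)).
have abM := OmZ_abelem (pHall_pgroup tS'.2); have Apt' := Ap_top cc' tS'.1.
have sMH : OmZ S' \subset H.
  rewrite subsetI (OmZ_Sylow_cent_sub tS'.2) centsC (subset_trans _ (abelem_abelian abM)) //.
  by rewrite (subset_trans sXt) // (subset_trans stt') // (Ap_sub_OmZ_Sylow_cent Apt' tS'.2).
have rankM : 'r_p(OmZ S') = r.+1 by rewrite (OmZ_top_rank Apt' tS'.2) (negbTE nbt').
have sRyM : OmZ (R :^ y)%G \subset OmZ S' by rewrite OmZJ -eOmZS conjSg.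
have [n /setIP[/setIP[Gn cXn] Nn] eOmZR] := OmZ_Sylow_conj_normM p_pr sylP rankG sHG
  (Sylow_subgroup_Sylow sHG sylR (pHall_sub sylRH)) sMH abM rankM sylRyH sylR'H sRyM sRS'.
exists (y * n); first exact: groupM.
rewrite -conj_chainM !conj_chainU1 (conj_below_part_cent tS.1 cy) eOmZS.
have -> : ((OmZ R :^ y) :^ n)%G = OmZ R'.
  by apply: val_inj; rewrite -(congr1 val eOmZR) /= centerJ OhmJ.
rewrite (conj_chain_cent (A := X) _ cXn) => [|E EcA]; last exact: bigcup_sup.
have -> : (OmZ S' :^ n)%G = OmZ S' by apply/val_inj/normP.
by rewrite !setUS // below_partS.
Qed.

Lemma anchor_rel_homo c c' d d' : chain c -> chain c' -> c \subset c' ->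
  anchor_rel c d -> anchor_rel c' d' -> exists2 g, g \in G & conj_chain d g \subset d'.
Proof.
move=> cc cc' scc' [t [S [R [tS sylR cR sRS ->]]]].
have [bt | nbt] := boolP (below t).
  rewrite (below_part_id tS.1 bt) in cR *.
  exact: anchor_rel_homo_below cc scc' tS bt sylR cR sRS.
exact: anchor_rel_homo_nonbelow cc cc' scc' tS nbt sylR cR sRS.
Qed.

Lemma prune_anchor_rel c d d' : chain c -> prune_rel c d -> anchor_rel c d' ->
  exists2 g, g \in G & conj_chain d g \subset d'.
Proof.
move=> cc [t [S [[tc sylS] ->]]] [t' [S' [R' [[tc' sylS'] _ _ _ ->]]]].
rewrite -(is_top_uniq tc tc') in sylS' *.
case: ifP => bt.
  exists 1; rewrite ?group1 // conj_chain1 -{1}(below_part_id tc bt).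
  exact: subset_trans (subsetU1 _ _) (subsetU1 _ _).
have [y /setIP[Gy cy] eOmZ] := OmZ_Sylow_cent_conj (subxx t) (Ap_top cc tc) (Ap_top cc tc) erefl sylS sylS'.
exists y => //; rewrite conj_chainU1 eOmZ (conj_below_part_cent tc cy).
by rewrite setUS ?subsetU1.
Qed.

Lemma OmZP_anchor_rel c d : anchor_rel c d ->
  exists2 g, g \in G & conj_chain [set OmZ P] g \subset d.
Proof.
move=> [t [S [R [_ sylR _ _ ->]]]]; have [x Gx eR] := Sylow_OmZ_conj sylP sylR.
exists x; rewrite // conj_chain_set1 sub1set.
have -> : (OmZ P :^ x)%G = OmZ R by apply: val_inj; rewrite /= eR.
by rewrite setU1r ?setU11.
Qed.

End ChainRelations.

Theorem theorem5p9 (gT : finGroupType) (G P : {group gT}) (p : nat) :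
  prime p -> (p %| #|G|)%N -> P \in ('Syl_p(G))%g ->
  (p_rank p G - p_rank p ('Ohm_1('Z(P)))%g <= 1)%N ->
  contractible (Ap_orbit_space G p).
Proof.
move=> p_pr p_dvd_G; rewrite inE => sylP rankG.
rewrite leq_subLR addn1 in rankG.
have ntOmZ : (OmZ P :!=: 1)%g.
  apply/(OmZ_neq1 (pHall_pgroup sylP)); rewrite -cardG_gt1 (card_Hall sylP).
  by rewrite p_part_gt1 mem_primes p_pr cardG_gt0.
have [f1 f1R] := realizing_map_exists (@extend_relJ _ G P p) (@extend_rel_total _ G P p).
have [f2 f2R] := realizing_map_exists (@prune_relJ _ G P p) (@prune_rel_total _ G P p).
have [f3 f3R] := realizing_map_exists (@anchor_relJ _ G P p) (anchor_rel_total p_pr sylP ntOmZ rankG).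
have [base base_orbit] := Ap_orbit_pt_of (Ap_chain1 (OmZ_Sylow_Ap sylP ntOmZ sylP)).
apply: (@alexandrov_zigzag_contractible _ _ (@Ap_orbit_le_refl _ G p) f1 f2 f3 base).
- exact: realizes_homo f1R (extend_rel_homo p_pr sylP rankG).
- exact: realizes_homo f2R (prune_rel_homo p_pr sylP rankG).
- exact: realizes_homo f3R (anchor_rel_homo p_pr sylP rankG).
- exact: le_realizes f1R (@extend_rel_sub _ G P p).
- exact: realizes_le f2R f1R (prune_extend_rel p_pr sylP rankG).
- exact: realizes_le f2R f3R (prune_anchor_rel p_pr sylP rankG).
by apply: const_le_realizes base_orbit f3R _ => c d _ /(OmZP_anchor_rel sylP).
Qed.
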